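(* There is $k_0$ such that for every $k\geq k_0$ the following holds. Let $G$ be a finite bipartite graph with vertex classes $A$ and $B$ satisfying $\Delta(G)\leq k^7$, $d(G)\geq k/4$, and $d_G(v)\leq k$ for every $v\in A$. Then $G$ contains a subgraph with maximum degree at most $k$ and average degree at least $k/(400\log k)$.
   Context: $d(G)=2e(G)/|V(G)|$ is the average degree, $d_G(v)$ the degree of $v$, $\Delta(G)$ the maximum degree. Logarithms are to base $2$. *)

From Stdlib Require Import Reals.
From mathcomp Require Import all_boot.
Set Implicit Arguments. Unset Strict Implicit. Unset Printing Implicit Defensive.

Section Graphs.
Variable T : finType.

Definition simple_graph (V : {set T}) (E : rel T) : Prop :=
  symmetric E /\ irreflexive E /\ (forall x y, E x y -> x \in V /\ y \in V).

Definition deg (E : rel T) (v : T) : nat := #|[set w | E v w]|.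

Definition edge_set (E : rel T) : {set {set T}} :=
  [set s | [exists x, exists y, E x y && (s == [set x; y])]].

Definition num_edges (E : rel T) : nat := #|edge_set E|.

(* d(G) = 2 e(G) / |V(G)|  (real division; 0 for the empty graph) *)
Definition avg_deg (V : {set T}) (E : rel T) : R :=
  Rdiv (Rmult 2 (INR (num_edges E))) (INR #|V|).

Definition max_deg_le (V : {set T}) (E : rel T) (m : nat) : Prop :=
  forall v, v \in V -> deg E v <= m.

Definition subgraph (VH : {set T}) (EH : rel T) (V : {set T}) (E : rel T) : Prop :=
  simple_graph VH EH /\ VH \subset V /\ (forall x y, EH x y -> E x y).

Definition bipartite_classes (V : {set T}) (E : rel T) (A B : {set T}) : Prop :=
  A :&: B = set0 /\ A :|: B = V /\
  (forall x y, E x y -> (x \in A /\ y \in B) \/ (x \in B /\ y \in A)).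
End Graphs.

Definition log2 (x : R) : R := Rdiv (ln x) (ln 2).

From Stdlib Require Import Reals Lra Psatz.
From mathcomp Require Import all_boot zify.
Set Implicit Arguments. Unset Strict Implicit. Unset Printing Implicit Defensive.

(* MathComp's [ring_scope] takes over the key [%R]. *)
Delimit Scope R_scope with Re.

(* Since Delta(G) <= k^7, the vertices of B fall into O(log k) dyadic
   classes, those whose degree lies in [(M-1)k, 2Mk] for M = 2^t, and one class Y
   carries a 1/O(log k) share of the edges.  Colour all vertices with M colours so
   as to minimise sum_(y in Y) sum_j d_j(y)^2, where d_j(y) counts the neighbours
   of y of colour j.  Recolouring a single vertex cannot help, which bounds this
   sum by (2k+1) sum_(y in Y) d(y); as 4kd <= 4k min(d,k) + d^2, the capped counts
   min(d_j(y), k) then add up to at least a quarter of the degrees in Y.  For a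
   colour j chosen by averaging, join each y in Y to at most k of its neighbours
   of colour j: vertices of A already have degree at most k, so this subgraph on
   Y plus colour class j has maximum degree k and average degree
   Omega(k / log k). *)

Lemma card_set_sum (T : finType) (P : pred T) : #|[set x | P x]| = \sum_x P x.
Proof. by rewrite -sum1dep_card big_mkcond. Qed.

Lemma card_set_take_enum (T : finType) (S : {set T}) (n : nat) :
  #|[set x in take n (enum S)]| = minn #|S| n.
Proof.
rewrite cardsE; move/card_uniqP: (take_uniq n (enum_uniq (mem S))) => ->.
by rewrite size_take_min -cardE minnC.
Qed.

Lemma exists_ratio_ge_mediant (I : finType) (i0 : I) (f g : I -> nat) :
  exists j, g j * \sum_i f i <= f j * \sum_i g i.
Proof.
apply/existsP; case: (boolP [exists j, _]) => // /existsPn small; exfalso.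
have : \sum_j (f j * \sum_i g i + 1) <= \sum_j g j * \sum_i f i.
  by apply: leq_sum => j _; rewrite addn1 ltnNge small.
rewrite big_split -!big_distrl /= sum1_card mulnC.
apply/negP; rewrite -ltnNge -[X in X < _]addn0 ltn_add2l.
by apply/card_gt0P; exists i0.
Qed.

Lemma exists_dyadic_scale (k n m : nat) : n <= 2 ^ m.+1 * k ->
  exists t, [/\ t <= m, 2 ^ t * k <= k + n & n <= 2 * 2 ^ t * k].
Proof.
elim: m => [|m IHm] n_le; first by exists 0; rewrite mul1n leq_addr.
have [/IHm [t [tm lo hi]] | big] := leqP n (2 ^ m.+1 * k).
  by exists t; split => //; apply: leqW.
by exists m.+1; rewrite -expnS; split => //; apply: ltnW; rewrite ltn_addl.
Qed.

Section MonochromaticWeight.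
Variables (T : finType) (w : T -> T -> nat) (M : nat).
Hypothesis w_sym : forall u z, w u z = w z u.
Implicit Types (c : {ffun T -> 'I_M}) (x : T) (j : 'I_M).

Definition mono_weight c := \sum_u \sum_z w u z * (c u == c z).

Definition colour_weight c x j := \sum_(z | z != x) w x z * (j == c z).

Definition recolour c x j : {ffun T -> 'I_M} :=
  [ffun z => if z == x then j else c z].

Lemma mono_weight_split c x :
  mono_weight c = w x x + 2 * colour_weight c x (c x) +
                  \sum_(u | u != x) \sum_(z | z != x) w u z * (c u == c z).
Proof.
rewrite /mono_weight (bigD1 x) //= (bigD1 x) //= eqxx muln1.
have -> : \sum_(u | u != x) \sum_z w u z * (c u == c z) =
          colour_weight c x (c x) +
          \sum_(u | u != x) \sum_(z | z != x) w u z * (c u == c z).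
  rewrite /colour_weight -big_split; apply: eq_bigr => u ux.
  by rewrite (bigD1 x) // w_sym eq_sym.
rewrite -/(colour_weight c x (c x)); lia.
Qed.

Lemma mono_weight_min_colour c x j :
  (forall c', mono_weight c <= mono_weight c') ->
  colour_weight c x (c x) <= colour_weight c x j.
Proof.
move/(_ (recolour c x j)); rewrite !(mono_weight_split _ x) ffunE eqxx.
have -> : colour_weight (recolour c x j) x j = colour_weight c x j.
  by apply: eq_bigr => z zx; rewrite ffunE (negbTE zx).
have -> : \sum_(u | u != x) \sum_(z | z != x) w u z * (recolour c x j u == recolour c x j z)
        = \sum_(u | u != x) \sum_(z | z != x) w u z * (c u == c z).
  apply: eq_bigr => u ux; apply: eq_bigr => z zx.
  by rewrite !ffunE (negbTE ux) (negbTE zx).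
lia.
Qed.

Lemma sum_colour_weight c x : \sum_j colour_weight c x j = \sum_(z | z != x) w x z.
Proof.
rewrite exchange_big /=; apply: eq_bigr => z _; rewrite -big_distrr /=.
by rewrite (bigD1 (c z)) //= eqxx big1 ?addn0 ?muln1 // => j /negbTE ->.
Qed.

Lemma mono_weight_diag c :
  mono_weight c = \sum_u w u u + \sum_u colour_weight c u (c u).
Proof.
rewrite -big_split; apply: eq_bigr => u _.
by rewrite (bigD1 u) //= eqxx muln1.
Qed.

(* Local optimality puts at most a 1/M share of the weight at u on its own colour. *)
Lemma mono_weight_min_bound c :
  (forall c', mono_weight c <= mono_weight c') ->
  M * mono_weight c <= M * \sum_u w u u + \sum_u \sum_z w u z.
Proof.
move=> c_min; rewrite mono_weight_diag mulnDr leq_add2l big_distrr /=.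
apply: leq_sum => u _.
apply: (@leq_trans (\sum_j colour_weight c u j)).
  rewrite -[X in X * _]card_ord -sum1_card big_distrl /=.
  by apply: leq_sum => j _; rewrite mul1n mono_weight_min_colour.
by rewrite sum_colour_weight [X in _ <= X](bigD1 u) //= leq_addl.
Qed.

End MonochromaticWeight.

Section Codegree.
Variables (T : finType) (E : rel T) (Y : {set T}) (M : nat).
Implicit Type c : {ffun T -> 'I_M}.

Definition codegree (u z : T) : nat := \sum_(y in Y) (E y u && E y z).

Definition deg_in_colour c y (j : 'I_M) : nat := #|[set x | E y x & c x == j]|.

Lemma codegree_sym u z : codegree u z = codegree z u.
Proof. by apply: eq_bigr => y _; rewrite andbC. Qed.

Lemma sum_codegree_diag : \sum_u codegree u u = \sum_(y in Y) deg E y.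
Proof.
rewrite exchange_big; apply: eq_bigr => y _.
by rewrite /deg card_set_sum; apply: eq_bigr => u _; rewrite andbb.
Qed.

Lemma sum_codegree : \sum_u \sum_z codegree u z = \sum_(y in Y) deg E y ^ 2.
Proof.
under eq_bigr => u _ do rewrite exchange_big /=.
rewrite exchange_big; apply: eq_bigr => y _.
rewrite /deg card_set_sum expnS expn1 big_distrl; apply: eq_bigr => u _ /=.
by rewrite big_distrr; apply: eq_bigr => z _; case: (E y u); case: (E y z).
Qed.

Lemma sum_deg_in_colour c y : \sum_j deg_in_colour c y j = deg E y.
Proof.
under eq_bigr => j _ do rewrite /deg_in_colour card_set_sum.
rewrite /deg card_set_sum exchange_big; apply: eq_bigr => x _.
rewrite (bigD1 (c x)) //= eqxx andbT big1 ?addn0 // => j jx.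
by rewrite eq_sym (negbTE jx) andbF.
Qed.

Lemma mono_weight_codegree c :
  mono_weight codegree c = \sum_(y in Y) \sum_j deg_in_colour c y j ^ 2.
Proof.
rewrite /mono_weight.
under eq_bigr => u _ do (under eq_bigr => z _ do rewrite big_distrl /=; rewrite exchange_big /=).
rewrite exchange_big; apply: eq_bigr => y _ /=.
under [RHS]eq_bigr => j _ do rewrite /deg_in_colour card_set_sum expnS expn1 big_distrl /=.
rewrite [RHS]exchange_big; apply: eq_bigr => u _ /=.
under [RHS]eq_bigr => j _ do rewrite big_distrr /=.
rewrite [RHS]exchange_big; apply: eq_bigr => z _ /=.
rewrite (bigD1 (c u)) //= big1 => [|j /negbTE ju]; last by rewrite eq_sym ju andbF.
by rewrite addn0 eqxx andbT eq_sym; case: (E y u); case: (E y z); case: (c z == c u).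
Qed.

Lemma leq_mul_minn_sqr k d : 4 * k * d <= 4 * k * minn d k + d ^ 2.
Proof. by have := (nat_Cauchy d (2 * k)).1; lia. Qed.

Lemma min_colouring_capped_degrees c k : 0 < M -> 0 < k ->
  (forall c', mono_weight codegree c <= mono_weight codegree c') ->
  (forall y, y \in Y -> deg E y <= 2 * M * k) ->
  \sum_(y in Y) deg E y <= 4 * \sum_(y in Y) \sum_j minn (deg_in_colour c y j) k.
Proof.
move=> M_gt0 k_gt0 c_min deg_le.
set D := \sum_(y in Y) deg E y.
have sqr_le : \sum_(y in Y) deg E y ^ 2 <= 2 * M * k * D.
  rewrite big_distrr leq_sum // => y yY.
  by rewrite expnS expn1 leq_mul2r deg_le ?orbT.
have weight_le : mono_weight codegree c <= (2 * k + 1) * D.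
  rewrite -(leq_pmul2l M_gt0).
  have := mono_weight_min_bound codegree_sym c_min.
  rewrite sum_codegree_diag sum_codegree -/D; lia.
have cap : 4 * k * D <= 4 * k * \sum_(y in Y) \sum_j minn (deg_in_colour c y j) k
                        + mono_weight codegree c.
  rewrite mono_weight_codegree !big_distrr -big_split leq_sum // => y _.
  rewrite -(sum_deg_in_colour c y) !big_distrr -big_split leq_sum // => j _.
  exact: leq_mul_minn_sqr.
nia.
Qed.

End Codegree.

Section BipartiteEdges.
Variables (T : finType) (E : rel T) (A B : {set T}).
Hypotheses (E_sym : symmetric E) (AB_disj : A :&: B = set0).
Hypothesis E_bip : forall x y, E x y -> (x \in A /\ y \in B) \/ (x \in B /\ y \in A).

Lemma notin_A_of_B x : x \in B -> x \notin A.
Proof. by apply: contraL => xA; rewrite (disjointFr _ xA) // -setI_eq0 AB_disj. Qed.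

Lemma edge_set_bipartite :
  edge_set E = [set [set p.1; p.2] | p in [set p | (p.1 \in B) && E p.1 p.2]].
Proof.
apply/setP => s; rewrite inE; apply/existsP/imsetP.
  case=> x /existsP [y /andP [Exy /eqP ->]].
  case: (E_bip Exy) => [[xA yB] | [xB yA]].
    by exists (y, x); [rewrite inE /= yB E_sym | rewrite setUC].
  by exists (x, y); rewrite ?inE /= ?xB.
case=> [[x y]]; rewrite inE /= => /andP [xB Exy] ->.
by exists x; apply/existsP; exists y; rewrite Exy eqxx.
Qed.

Lemma num_edges_bipartite : num_edges E = \sum_(b in B) deg E b.
Proof.
rewrite /num_edges edge_set_bipartite card_in_imset.
  rewrite card_set_sum -(pair_big predT predT (fun b y => ((b \in B) && E b y : nat))) /=.
  rewrite [RHS]big_mkcond; apply: eq_bigr => b _.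
  by rewrite /deg card_set_sum; case: (b \in B) => //; rewrite big1.
have edge_AB p : p \in [set p | (p.1 \in B) && E p.1 p.2] -> p.1 \in B /\ p.2 \in A.
  rewrite inE => /andP [p1B /E_bip [[p1A _] | [_ p2A]]] //.
  by move: (notin_A_of_B p1B); rewrite p1A.
move=> [x y] [x' y'] /edge_AB [/= xB yA] /edge_AB [/= x'B y'A] eq_xy.
have /orP [/eqP -> | /eqP xy'] : (x == x') || (x == y') by rewrite -in_set2 -eq_xy set21.
  have /orP [/eqP yx' | /eqP -> //] : (y == x') || (y == y') by rewrite -in_set2 -eq_xy set22.
  by move: (notin_A_of_B x'B); rewrite -yx' yA.
by move: (notin_A_of_B xB); rewrite xy' y'A.
Qed.
End BipartiteEdges.

Section StarSubgraph.
Variables (T : finType) (E : rel T) (A B Y W : {set T}) (S : T -> {set T}).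
Hypotheses (E_simple : simple_graph [set: T] E) (E_bip : bipartite_classes [set: T] E A B).
Hypothesis YB : Y \subset B.
Hypothesis S_nbr : forall y, S y \subset [set x in W | E y x].

Definition star_rel : rel T :=
  [rel u v | (u \in Y) && (v \in S u) || (v \in Y) && (u \in S v)].

Lemma star_rel_sym : symmetric star_rel.
Proof. by move=> u v; rewrite /star_rel /= orbC. Qed.

Lemma mem_star x y : x \in S y -> E y x.
Proof. by move/(subsetP (S_nbr y)); rewrite inE => /andP []. Qed.

Lemma star_relW u v : star_rel u v -> E u v.
Proof.
case: E_simple => E_sym _.
by case/orP => /andP [_ /mem_star]; rewrite // E_sym.
Qed.

Lemma star_subgraph : subgraph (Y :|: W) star_rel [set: T] E.
Proof.
case: E_simple => _ [E_irr _].
split; last by split; [apply: subsetT | apply: star_relW].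
split; first exact: star_rel_sym.
split; first by move=> u; apply/negP => /star_relW; rewrite E_irr.
have inW x y : x \in S y -> x \in Y :|: W.
  by move/(subsetP (S_nbr y)); rewrite !inE => /andP [->]; rewrite orbT.
by move=> u v /orP [] /andP [inY /inW inYW]; rewrite inYW !inE inY.
Qed.

Lemma star_max_deg (k : nat) : (forall y, #|S y| <= k) ->
  (forall v, v \in A -> deg E v <= k) -> max_deg_le (Y :|: W) star_rel k.
Proof.
case: E_bip => AB_disj [_ E_AB] S_card A_deg v _; case vA: (v \in A).
  apply: leq_trans (A_deg v vA); apply/subset_leq_card/subsetP => x.
  by rewrite !inE => /star_relW.
apply: leq_trans (S_card v); apply/subset_leq_card/subsetP => x.
rewrite inE => /orP [/andP [_ //] | /andP [xY /mem_star /E_AB]].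
case=> [[xA _] | [_ vA']]; last by rewrite vA' in vA.
by move: (notin_A_of_B AB_disj (subsetP YB x xY)); rewrite xA.
Qed.

Lemma star_num_edges : \sum_(y in Y) #|S y| <= num_edges star_rel.
Proof.
case: E_bip => AB_disj [_ E_AB].
have star_AB x y : star_rel x y -> (x \in A /\ y \in B) \/ (x \in B /\ y \in A).
  by move/star_relW/E_AB.
rewrite (num_edges_bipartite star_rel_sym AB_disj star_AB).
rewrite [X in _ <= X](big_setID Y) (setIidPr YB) /=; apply: leq_trans (leq_addr _ _).
apply: leq_sum => y yY; apply/subset_leq_card/subsetP => x xS.
by rewrite inE /star_rel /= yY xS.
Qed.

End StarSubgraph.

Section CappedSubgraph.
Variables (T : finType) (E : rel T) (A B : {set T}) (k : nat).
Hypotheses (E_simple : simple_graph [set: T] E) (E_bip : bipartite_classes [set: T] E A B).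
Hypothesis A_deg : forall v, v \in A -> deg E v <= k.
Hypothesis k_gt0 : 0 < k.

Lemma capped_subgraph_of_degree_class (Y : {set T}) (M : nat) : 0 < M -> Y \subset B ->
  (forall y, y \in Y -> deg E y <= 2 * M * k) ->
  exists VH (EH : rel T),
    [/\ subgraph VH EH [set: T] E, max_deg_le VH EH k, Y \subset VH &
        (\sum_(y in Y) deg E y) * #|VH| <= 4 * num_edges EH * (M * #|Y| + #|T|)].
Proof.
move=> M_gt0 YB deg_le.
pose c0 : {ffun T -> 'I_M} := [ffun _ => Ordinal M_gt0].
pose c := [arg min_(c < c0) mono_weight (codegree E Y) c].
have c_min (c' : {ffun T -> 'I_M}) :
    mono_weight (codegree E Y) c <= mono_weight (codegree E Y) c'.
  by rewrite /c; case: arg_minnP => // c1 _ c1_min; apply: c1_min.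
have capped := min_colouring_capped_degrees M_gt0 k_gt0 c_min deg_le.
pose e j := \sum_(y in Y) minn (deg_in_colour E c y j) k.
pose V j := Y :|: [set x | c x == j].
have [j ratio_j] := exists_ratio_ge_mediant (Ordinal M_gt0) e (fun j => #|V j|).
have sum_V : \sum_j #|V j| <= M * #|Y| + #|T|.
  apply: (@leq_trans (\sum_(j < M) (#|Y| + #|[set x | c x == j]|))).
    by apply: leq_sum => i _; rewrite leq_card_setU.
  rewrite big_split /= sum_nat_const card_ord leq_add2l -sum1_card.
  under eq_bigr => i _ do rewrite card_set_sum.
  rewrite exchange_big leq_sum // => x _.
  by rewrite (bigD1 (c x)) //= eqxx big1 // => i /negbTE; rewrite eq_sym => ->.
pose S y := [set x in take k (enum [set x | E y x & c x == j])].
have S_nbr y : S y \subset [set x in [set x | c x == j] | E y x].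
  by apply/subsetP => x; rewrite /S inE => /mem_take; rewrite mem_enum !inE andbC.
have S_card y : #|S y| <= k by rewrite card_set_take_enum geq_minr.
exists (V j), (star_rel Y S); split.
- exact: star_subgraph.
- exact: (star_max_deg E_simple E_bip YB S_nbr S_card A_deg).
- exact: subsetUl.
have e_j : e j <= num_edges (star_rel Y S).
  apply: leq_trans (star_num_edges E_simple E_bip YB S_nbr).
  by apply: leq_sum => y _; rewrite card_set_take_enum.
rewrite exchange_big /= -/e in capped.
apply: leq_trans (leq_mul capped (leqnn #|V j|)) _.
rewrite -!mulnA leq_pmul2l // mulnC.
exact: leq_trans ratio_j (leq_mul e_j sum_V).
Qed.

End CappedSubgraph.

Lemma dyadic_degree_class (T : finType) (f : T -> nat) (B : {set T}) (k m : nat) :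
  (forall b, b \in B -> f b <= 2 ^ m.+1 * k) ->
  exists M (Y : {set T}),
    [/\ 0 < M, Y \subset B,
        forall y, y \in Y -> M * k <= k + f y /\ f y <= 2 * M * k &
        \sum_(b in B) f b <= m.+1 * \sum_(y in Y) f y].
Proof.
move=> f_le.
pose Y (t : 'I_m.+1) := [set b in B | (2 ^ t * k <= k + f b) && (f b <= 2 * 2 ^ t * k)].
have YB t : Y t \subset B by apply/subsetP => b; rewrite inE => /andP [].
have [t heavy] := exists_ratio_ge_mediant ord0 (fun t => \sum_(y in Y t) f y) (fun _ => 1).
exists (2 ^ t), (Y t); split => //.
- by rewrite expn_gt0.
- by move=> y; rewrite inE => /andP [_ /andP [lo hi]].
apply: leq_trans (_ : \sum_t \sum_(y in Y t) f y <= _).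
  rewrite (exchange_big_dep (mem B)) /=; last by move=> t' b _; apply/subsetP.
  apply: leq_sum => b bB; have [s [sm lo hi]] := exists_dyadic_scale (f_le b bB).
  have bY : b \in Y (Ordinal (sm : s < m.+1)) by rewrite inE bB lo hi.
  by rewrite (bigD1 (Ordinal (sm : s < m.+1))) ?leq_addr.
by move: heavy; rewrite sum_nat_const card_ord mul1n muln1 mulnC.
Qed.

Lemma exists_capped_dense_subgraph (k m : nat) (T : finType) (E : rel T) (A B : {set T}) :
  0 < k -> 0 < m -> simple_graph [set: T] E -> bipartite_classes [set: T] E A B ->
  max_deg_le [set: T] E (2 ^ m * k) ->
  (forall v, v \in A -> deg E v <= k) ->
  0 < num_edges E -> k * #|T| <= 8 * num_edges E ->
  exists VH (EH : rel T),
    [/\ subgraph VH EH [set: T] E, max_deg_le VH EH k, 0 < #|VH| &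
        k * #|VH| <= 4 * (16 * m + 1) * num_edges EH].
Proof.
move=> k_gt0 m_gt0 E_simple E_bip E_max A_deg e_gt0 dense.
have [[E_sym _] [AB_disj [_ E_AB]]] := (E_simple, E_bip).
have B_deg b : b \in B -> deg E b <= 2 ^ m.-1.+1 * k by rewrite prednK // => _; apply: E_max.
have [M [Y [M_gt0 YB Y_deg heavy]]] := dyadic_degree_class B_deg.
rewrite -(num_edges_bipartite E_sym AB_disj E_AB) prednK // in heavy.
have Y_deg_le y : y \in Y -> deg E y <= 2 * M * k by case/Y_deg.
have [VH [EH [H_sub H_max YVH H_dense]]] :=
  capped_subgraph_of_degree_class E_simple E_bip A_deg k_gt0 M_gt0 YB Y_deg_le.
set D := \sum_(y in Y) deg E y in heavy H_dense.
have D_gt0 : 0 < D by nia.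
have MY : k * (M * #|Y|) <= D + k * #|T|.
  apply: (@leq_trans (D + k * #|Y|)); last by rewrite leq_add2l leq_mul2l max_card orbT.
  have : \sum_(y in Y) M * k <= \sum_(y in Y) (k + deg E y).
    by apply: leq_sum => y /Y_deg [].
  rewrite big_split !sum_nat_const /= -/D; lia.
exists VH, EH; split => //.
  have [y yY] : exists y, y \in Y.
    by apply/set0Pn/negP => /eqP Y0; move: D_gt0; rewrite /D Y0 big_set0.
  by apply/card_gt0P; exists y; apply: (subsetP YVH).
rewrite -(leq_pmul2l D_gt0).
apply: (@leq_trans (4 * num_edges EH * (k * (M * #|Y|) + k * #|T|))); first nia.
apply: (@leq_trans (4 * num_edges EH * (D + 16 * num_edges E))); first nia.
nia.
Qed.

Lemma avg_deg_gt0 (T : finType) (V : {set T}) (E : rel T) :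
  (0 < avg_deg V E)%Re -> 0 < #|V| /\ 0 < num_edges E.
Proof.
rewrite /avg_deg !lt0n => avg_pos; split; apply/eqP => zero; move: avg_pos; rewrite zero /=.
  by rewrite /Rdiv Rinv_0 Rmult_0_r; lra.
by rewrite Rmult_0_r /Rdiv Rmult_0_l; lra.
Qed.

Lemma le_avg_deg (T : finType) (V : {set T}) (E : rel T) (x : R) : 0 < #|V| ->
  (x <= avg_deg V E)%Re <-> (x * INR #|V| <= 2 * INR (num_edges E))%Re.
Proof.
move=> V_gt0; have n_pos : (0 < INR #|V|)%Re by apply/lt_0_INR/ltP.
rewrite /avg_deg; split => [x_le | x_le].
  apply: Rle_trans (Rmult_le_compat_r _ _ _ (Rlt_le _ _ n_pos) x_le) _.
  by right; field; lra.
apply: (Rmult_le_reg_r _ _ _ n_pos); apply: Rle_trans x_le _.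
by right; field; lra.
Qed.

Lemma num_edges_ge_of_avg_deg (T : finType) (V : {set T}) (E : rel T) (k : nat) :
  0 < k -> (INR k / 4 <= avg_deg V E)%Re ->
  0 < num_edges E /\ k * #|V| <= 8 * num_edges E.
Proof.
move=> k_gt0 avg_ge.
have Rk_pos : (0 < INR k)%Re by apply/lt_0_INR/ltP.
have [V_gt0 e_gt0] : 0 < #|V| /\ 0 < num_edges E.
  by apply: avg_deg_gt0; apply: Rlt_le_trans avg_ge; lra.
split => //; move/(le_avg_deg _ _ V_gt0): avg_ge => avg_ge.
apply/leP/INR_le; rewrite !mult_INR (_ : INR 8 = 8%Re); first lra.
by rewrite INR_IZR_INZ.
Qed.

Lemma INR_expn (a n : nat) : INR (a ^ n) = (INR a ^ n)%Re.
Proof. by elim: n => [|n IHn] //=; rewrite expnS -multE mult_INR IHn. Qed.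

Lemma trunc_log2_le_log2 (n : nat) : 0 < n -> (INR (trunc_log 2 n) <= log2 (INR n))%Re.
Proof.
move=> n_gt0; have ln2_pos : (0 < ln 2)%Re by have := ln_lt_2; lra.
have pow_le : (2 ^ trunc_log 2 n <= INR n)%Re.
  by rewrite -[2%Re]/(INR 2) -INR_expn; apply/le_INR/leP/trunc_logP.
apply: (Rmult_le_reg_r _ _ _ ln2_pos); rewrite /log2 /Rdiv Rmult_assoc Rinv_l; last lra.
rewrite Rmult_1_r -ln_pow; last lra.
case: (Rle_lt_or_eq_dec _ _ pow_le) => [lt | ->]; last exact: Rle_refl.
by apply/Rlt_le/ln_increasing => //; apply: pow_lt; lra.
Qed.

Lemma avg_deg_ge_of_num_edges (T : finType) (V : {set T}) (E : rel T) (k : nat) :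
  1 < k -> 0 < #|V| -> k * #|V| <= 800 * trunc_log 2 k * num_edges E ->
  (INR k / (400 * log2 (INR k)) <= avg_deg V E)%Re.
Proof.
move=> k_gt1 V_gt0 dense; apply/le_avg_deg => //.
have tl_le := trunc_log2_le_log2 (ltnW k_gt1).
have tl_ge1 : (1 <= INR (trunc_log 2 k))%Re by apply/(le_INR 1)/leP/trunc_log_max.
have e_ge0 := pos_INR (num_edges E).
move/leP/le_INR: dense; rewrite !mult_INR (_ : INR 800 = 800%Re); last first.
  by rewrite INR_IZR_INZ.
move=> dense; apply: (Rmult_le_reg_r (400 * log2 (INR k))%Re); first lra.
rewrite (_ : INR k / (400 * log2 (INR k)) * INR #|V| * (400 * log2 (INR k))
             = INR k * INR #|V|)%Re; last by field; lra.
nra.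
Qed.

Lemma expn_le_exp2_trunc_log (n p : nat) : n ^ p <= 2 ^ (p * (trunc_log 2 n).+1).
Proof.
rewrite mulnC expnM; case: p => [|p] //.
by rewrite leq_exp2r // ltnW // trunc_log_ltn.
Qed.

Theorem lemma9 :
  exists k0 : nat, forall k : nat, k0 <= k ->
  forall (T : finType) (E : rel T) (A B : {set T}),
    simple_graph [set: T] E ->
    bipartite_classes [set: T] E A B ->
    max_deg_le [set: T] E (k ^ 7) ->
    Rle (Rdiv (INR k) 4) (avg_deg [set: T] E) ->
    (forall v, v \in A -> deg E v <= k) ->
    exists (VH : {set T}) (EH : rel T),
      subgraph VH EH [set: T] E /\
      max_deg_le VH EH k /\
      Rle (Rdiv (INR k) (Rmult 400 (log2 (INR k)))) (avg_deg VH EH).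
Proof.
exists 2 => k k_gt1 T E A B E_simple E_bip E_max avg_ge A_deg.
have k_gt0 : 0 < k by apply: ltnW.
have [e_gt0] := num_edges_ge_of_avg_deg k_gt0 avg_ge; rewrite cardsT => dense.
set m := 6 * (trunc_log 2 k).+1.
have E_max' : max_deg_le [set: T] E (2 ^ m * k).
  move=> v /E_max /leq_trans; apply.
  by rewrite expnSr leq_mul2r expn_le_exp2_trunc_log orbT.
have [VH [EH [H_sub H_max VH_gt0 H_dense]]] :=
  exists_capped_dense_subgraph k_gt0 (isT : 0 < m) E_simple E_bip E_max' A_deg e_gt0 dense.
exists VH, EH; split => //; split => //.
apply: avg_deg_ge_of_num_edges => //; apply: leq_trans H_dense _.
have : 0 < trunc_log 2 k by apply: trunc_log_max.
by rewrite leq_mul2r /m; lia.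
Qed.
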